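(* Let $G$ be a bipartite instance, let $(u,v)\in E$ with $u$'s deadline earlier than $v$'s, and fix the ranks $\mathbf y_{-uv}$ of all vertices other than $u,v$. Let $\tau$ be the marginal rank of $u$ w.r.t. $\mathbf y_{-uv}$ in $G-\{v\}$, $\gamma$ the marginal rank of $v$ w.r.t. $\mathbf y_{-uv}$ in $G-\{u\}$, and for $y_u\in[0,1]$ let $\theta(y_u)$ be the marginal rank of $v$ in $G$ w.r.t. the ranks $(y_u,\mathbf y_{-uv})$. Then for every fixed $y_u>\tau$, with $y_v$ uniform on $[0,1)$, $$\mathbb{E}_{y_v}\big[\alpha_u+\alpha_v\mathbf 1(y_v>\gamma)\big]\ge 1-\gamma-(1-\theta(y_u))\,g(\theta(y_u))+\gamma\cdot\min\{g(y_u),\,1-g(\theta(y_u))\}.$$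
   Context: Fully online matching model on a graph $G=(V,E)$: each step is the arrival or the deadline of a vertex; at arrival, edges to previously arrived vertices are revealed; every neighbor of $v$ arrives before $v$'s deadline; at a vertex's deadline, if unmatched, it is irrevocably matched to an unmatched neighbor or left unmatched. Ranking: each vertex $w$ has a rank $y_w\in[0,1)$ (drawn uniformly at random on arrival); at the deadline of an unmatched vertex $w$, if it has unmatched neighbors it is matched to the unmatched neighbor of minimum rank. $M(\mathbf y)$ is the resulting matching for rank vector $\mathbf y$. If an edge $(a,b)$ is matched at $a$'s deadline, $a$ is called active and $b$ passive. Fix a non-decreasing $g:[0,1]\to[0,1]$ with $g(1)=1$. Dual variables: if $(a,b)$ is matched with $a$ active and $b$ passive, set $\alpha_a=1-g(y_b)$ and $\alpha_b=g(y_b)$; unmatched vertices have $\alpha=0$. Marginal rank: for a vertex $w$ in a graph $H$ and fixed ranks of all other vertices of $H$, the marginal rank of $w$ is the largest value $\theta\in[0,1]$ such that $w$ is passive in the matching produced by Ranking on $H$ when $y_w=\theta^-$ (rank infinitesimally below $\theta$); it equals $0$ if no such value exists. *)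

From Stdlib Require Import Reals Lra Lia List Permutation Arith.
Import ListNotations.
Open Scope R_scope.

(* Vertices are 0..n-1 (naturals).  [adj : nat -> nat -> bool] is the edge
   relation.  [ord] lists the vertices in the order of their deadlines.
   Since every neighbour of w arrives before w's deadline and matches are
   irrevocable, Ranking's run depends only on the graph and the deadline order:
   at w's deadline the whole neighbourhood of w is known. *)

Definition fo_instance (n : nat) (adj : nat -> nat -> bool) (ord : list nat) : Prop :=
  (forall a b, adj a b = adj b a) /\
  (forall a, adj a a = false) /\
  Permutation ord (seq 0 n).

Definition bipartite (n : nat) (adj : nat -> nat -> bool) : Prop :=
  exists side : nat -> bool,
    forall a b, (a < n)%nat -> (b < n)%nat -> adj a b = true -> side a <> side b.

Definition deadline_before (ord : list nat) (a b : nat) : Prop :=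
  exists l1 l2 l3, ord = l1 ++ a :: l2 ++ b :: l3.

Definition upd (y : nat -> R) (w : nat) (t : R) : nat -> R :=
  fun x => if Nat.eqb x w then t else y x.

(* A matching is a list of pairs (active, passive). *)
Definition matchedb (M : list (nat * nat)) (w : nat) : bool :=
  existsb (fun p => orb (Nat.eqb (fst p) w) (Nat.eqb (snd p) w)) M.

(* element of minimum rank; ties broken towards the earlier element (smaller index) *)
Fixpoint argmin (y : nat -> R) (best : nat) (l : list nat) : nat :=
  match l with
  | [] => best
  | x :: l' => if Rlt_dec (y x) (y best) then argmin y x l' else argmin y best l'
  end.

(* Ranking on the induced subgraph G[S]: deadline of w *)
Definition ranking_step (n : nat) (adj : nat -> nat -> bool) (S : nat -> bool)
    (y : nat -> R) (M : list (nat * nat)) (w : nat) : list (nat * nat) :=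
  if andb (S w) (negb (matchedb M w)) then
    match filter (fun x => andb (andb (S x) (adj w x)) (negb (matchedb M x))) (seq 0 n) with
    | [] => M
    | c :: cs => (w, argmin y c cs) :: M
    end
  else M.

Definition ranking (n : nat) (adj : nat -> nat -> bool) (ord : list nat)
    (S : nat -> bool) (y : nat -> R) : list (nat * nat) :=
  fold_left (ranking_step n adj S y) ord [].

Definition allv : nat -> bool := fun _ => true.
Definition minus1 (v : nat) : nat -> bool := fun x => negb (Nat.eqb x v).

Definition passive (M : list (nat * nat)) (w : nat) : Prop :=
  existsb (fun p => Nat.eqb (snd p) w) M = true.

Definition alpha (g : R -> R) (y : nat -> R) (M : list (nat * nat)) (w : nat) : R :=
  match find (fun p => Nat.eqb (fst p) w) M with
  | Some (_, b) => 1 - g (y b)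
  | None =>
      match find (fun p => Nat.eqb (snd p) w) M with
      | Some _ => g (y w)
      | None => 0
      end
  end.

Definition passive_below (n : nat) (adj : nat -> nat -> bool) (ord : list nat)
    (S : nat -> bool) (y : nat -> R) (w : nat) (theta : R) : Prop :=
  0 < theta <= 1 /\
  exists eps, eps > 0 /\
    forall t, theta - eps < t < theta -> 0 <= t ->
      passive (ranking n adj ord S (upd y w t)) w.

Definition is_marginal_rank (n : nat) (adj : nat -> nat -> bool) (ord : list nat)
    (S : nat -> bool) (y : nat -> R) (w : nat) (m : R) : Prop :=
  (m = 0 \/ passive_below n adj ord S y w m) /\
  forall theta, passive_below n adj ord S y w theta -> theta <= m.

Definition indic (b : R) (x : R) : R := if Rlt_dec b x then 1 else 0.

(* Fix [yu > tau] and let [t] be the rank of [v]. Up to the deadline of [u], Ranking on [G]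
   runs exactly as on [G - v] and on [G - u] unless [u] becomes passive in [G - v] or [v] in
   [G - u]; for [t > gam] neither happens, so at its deadline [u] takes [v] or the vertex [r] it
   would take in [G - v], and then [y_r <= theta] since otherwise [v] would be passive in [G] at
   ranks between [theta] and [y_r]. For any [t], an alternating-path comparison of [G] with
   [G - v] (here bipartiteness is used) shows that [u] is passive with [alpha_u = g yu] or takes
   a vertex of rank at most [theta]. Hence the integrand is at least [min (g yu) (1 - g theta)]
   below [gam], at least [1] between [gam] and [theta] (where [v] is passive at rank [t] and [u]
   takes a vertex ranked below [t]), and at least [1 - g theta] above; integrating gives the
   bound. The matching only changes when [t] crosses the rank of another vertex, so the
   integrand is piecewise an affine function of the monotone [g], hence Riemann integrable. *)

From Stdlib Require Import Reals List Sorted Lia Lra Permutation RList.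
From Coquelicot Require Import Rcomplements Hierarchy RInt.
Import ListNotations.
Open Scope R_scope.

(** * Ranking, one deadline at a time *)

(* [argmin] breaks ties towards the smaller index, so Ranking minimises this strict total order. *)
Definition rank_lt (y : nat -> R) (a b : nat) : Prop :=
  y a < y b \/ (y a = y b /\ (a < b)%nat).

Lemma rank_lt_irrefl y a : ~ rank_lt y a a.
Proof. unfold rank_lt; intros [H|[_ H]]; [lra|lia]. Qed.

Lemma rank_lt_trans y a b c : rank_lt y a b -> rank_lt y b c -> rank_lt y a c.
Proof.
  unfold rank_lt; intros [H|[H1 H2]] [H'|[H1' H2']]; try (left; lra).
  right; split; [lra|lia].
Qed.

Lemma rank_lt_asym y a b : rank_lt y a b -> ~ rank_lt y b a.
Proof. intros H1 H2; exact (rank_lt_irrefl y a (rank_lt_trans _ _ _ _ H1 H2)). Qed.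

Lemma rank_lt_ext y y' a b : y a = y' a -> y b = y' b -> (rank_lt y a b <-> rank_lt y' a b).
Proof. unfold rank_lt; intros -> ->; tauto. Qed.

Lemma rank_lt_le y a b : rank_lt y a b -> y a <= y b.
Proof. intros [H|[H _]]; lra. Qed.

(* [V] is the part of the list already scanned, [best] its minimum. *)
Lemma argmin_least y : forall l best V,
  In best V -> (forall z, In z V -> z = best \/ rank_lt y best z) ->
  (forall a b, In a V -> In b l -> (a < b)%nat) -> StronglySorted lt l ->
  In (argmin y best l) (V ++ l) /\
  forall z, In z (V ++ l) -> z = argmin y best l \/ rank_lt y (argmin y best l) z.
Proof.
  induction l as [|x l IH]; intros best V Hb Hmin Hord Hs.
  - simpl; rewrite app_nil_r; split; auto.
  - inversion Hs as [|? ? Hs' Hall]; subst.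
    assert (Hx : forall a, In a V -> (a < x)%nat) by (intros; apply Hord; simpl; auto).
    assert (Hxl : forall b, In b l -> (x < b)%nat)
      by (intros b Hb'; rewrite Forall_forall in Hall; auto).
    assert (Hsplit : forall a b, In a (V ++ [x]) -> In b l -> (a < b)%nat).
    { intros a b Ha Hb'. apply in_app_or in Ha; destruct Ha as [Ha|[<-|[]]]; auto.
      apply Nat.lt_trans with x; auto. }
    replace (V ++ x :: l) with ((V ++ [x]) ++ l) by (rewrite <- app_assoc; reflexivity).
    simpl. destruct (Rlt_dec (y x) (y best)) as [Hlt|Hge]; apply IH; auto.
    + apply in_or_app; right; simpl; auto.
    + intros z Hz; apply in_app_or in Hz; destruct Hz as [Hz|[<-|[]]]; auto.
      right. destruct (Hmin z Hz) as [->|Hbz]; [left; exact Hlt|].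
      apply rank_lt_trans with best; [left; exact Hlt|exact Hbz].
    + apply in_or_app; left; auto.
    + intros z Hz; apply in_app_or in Hz; destruct Hz as [Hz|[<-|[]]]; auto.
      right. unfold rank_lt. destruct (Rle_lt_or_eq_dec (y best) (y x)); [lra|auto|].
      right; split; auto.
Qed.

Lemma StronglySorted_filter_seq f : forall k a, StronglySorted lt (filter f (seq a k)).
Proof.
  induction k; intros a; simpl; [constructor|].
  destruct (f a); auto. constructor; auto.
  rewrite Forall_forall; intros z Hz. apply filter_In in Hz. destruct Hz as [Hz _].
  apply in_seq in Hz. lia.
Qed.


Definition candidate n (adj : nat -> nat -> bool) (S : nat -> bool) (M : list (nat * nat)) w z : Prop :=
  (z < n)%nat /\ S z = true /\ adj w z = true /\ matchedb M z = false.

Definition least_candidate n adj S M w y m : Prop :=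
  candidate n adj S M w m /\ forall z, candidate n adj S M w z -> z = m \/ rank_lt y m z.

Lemma In_candidates n adj S M w z :
  In z (filter (fun x => andb (andb (S x) (adj w x)) (negb (matchedb M x))) (seq 0 n)) <->
  candidate n adj S M w z.
Proof.
  rewrite filter_In, in_seq. unfold candidate.
  destruct (S z), (adj w z), (matchedb M z); simpl; intuition (try lia; try discriminate).
Qed.

Lemma ranking_step_spec n adj S y M w :
  (andb (S w) (negb (matchedb M w)) = false /\ ranking_step n adj S y M w = M) \/
  (andb (S w) (negb (matchedb M w)) = true /\ (forall z, ~ candidate n adj S M w z) /\
     ranking_step n adj S y M w = M) \/
  (andb (S w) (negb (matchedb M w)) = true /\
     exists m, least_candidate n adj S M w y m /\ ranking_step n adj S y M w = (w, m) :: M).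
Proof.
  unfold ranking_step. destruct (andb (S w) (negb (matchedb M w))) eqn:E; [right|left; auto].
  set (f := fun x => andb (andb (S x) (adj w x)) (negb (matchedb M x))).
  pose proof (StronglySorted_filter_seq f n 0) as Hs.
  pose proof (In_candidates n adj S M w) as Hc. fold f in Hc.
  destruct (filter f (seq 0 n)) as [|c cs].
  - left; repeat split; auto. intros z Hz; apply Hc in Hz; destruct Hz.
  - right; split; auto. exists (argmin y c cs); split; auto.
    inversion Hs as [|? ? Hs' Hall]; subst.
    destruct (argmin_least y cs c [c]) as [H1 H2]; simpl; auto.
    + intros z [->|[]]; auto.
    + intros a b [<-|[]] Hb. rewrite Forall_forall in Hall; auto.
    + split; [apply Hc; exact H1|]. intros z Hz. apply H2, Hc, Hz.
Qed.

Lemma ranking_step_cases n adj S y M w :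
  ranking_step n adj S y M w = M \/
  exists m, least_candidate n adj S M w y m /\ S w = true /\ matchedb M w = false /\
            ranking_step n adj S y M w = (w, m) :: M.
Proof.
  destruct (ranking_step_spec n adj S y M w) as [[_ H]|[[_ [_ H]]|[E [m [Hm H]]]]]; auto.
  right. exists m. apply andb_prop in E. destruct E as [E1 E2].
  apply Bool.negb_true_iff in E2. auto.
Qed.

Lemma least_candidate_unique n adj S S' M M' w w' y y' m m' :
  least_candidate n adj S M w y m -> least_candidate n adj S' M' w' y' m' ->
  candidate n adj S M w m' -> candidate n adj S' M' w' m ->
  (rank_lt y m' m <-> rank_lt y' m' m) -> m = m'.
Proof.
  intros [_ H1] [_ H2] c1 c2 e.
  destruct (H1 m' c1) as [->|h1]; auto.
  destruct (H2 m c2) as [->|h2]; auto.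
  apply e in h2. exfalso; exact (rank_lt_asym y _ _ h1 h2).
Qed.

Definition endpoints (M : list (nat * nat)) : list nat := flat_map (fun p => [fst p; snd p]) M.

Lemma endpoints_cons a b M : endpoints ((a, b) :: M) = a :: b :: endpoints M.
Proof. reflexivity. Qed.

Lemma In_endpoints a b M : In (a, b) M -> In a (endpoints M) /\ In b (endpoints M).
Proof. intros H. unfold endpoints; split; apply in_flat_map; exists (a, b); simpl; auto. Qed.

Lemma matchedb_endpoints M x : matchedb M x = true <-> In x (endpoints M).
Proof.
  unfold matchedb, endpoints. rewrite existsb_exists, in_flat_map. split.
  - intros [p [Hp Hx]]. exists p; split; auto. apply Bool.orb_true_iff in Hx.
    destruct Hx as [Hx|Hx]; apply Nat.eqb_eq in Hx; simpl; auto.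
  - intros [p [Hp Hx]]. exists p; split; auto. simpl in Hx.
    destruct Hx as [<-|[<-|[]]]; rewrite Nat.eqb_refl; auto using Bool.orb_true_r.
Qed.

Lemma matchedb_false_endpoints M x : matchedb M x = false <-> ~ In x (endpoints M).
Proof. rewrite <- matchedb_endpoints. destruct (matchedb M x); intuition discriminate. Qed.

Lemma matchedb_cons_false a b M x :
  matchedb ((a, b) :: M) x = false <-> x <> a /\ x <> b /\ matchedb M x = false.
Proof.
  rewrite !matchedb_false_endpoints, endpoints_cons. simpl. intuition.
Qed.

Lemma passive_In M w : passive M w <-> exists a, In (a, w) M.
Proof.
  unfold passive. rewrite existsb_exists. split.
  - intros [[a b] [H1 H2]]. simpl in H2. apply Nat.eqb_eq in H2; subst. eauto.
  - intros [a H]. exists (a, w); simpl; rewrite Nat.eqb_refl; auto.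
Qed.

Lemma ranking_fold_incl n adj S y : forall l M p,
  In p M -> In p (fold_left (ranking_step n adj S y) l M).
Proof.
  induction l as [|w l IH]; intros M p H; simpl; auto. apply IH.
  destruct (ranking_step_cases n adj S y M w) as [->|[m [_ [_ [_ ->]]]]]; simpl; auto.
Qed.

Lemma ranking_fold_passive n adj S y l M x :
  passive M x -> passive (fold_left (ranking_step n adj S y) l M) x.
Proof. rewrite !passive_In. intros [a H]. exists a. apply ranking_fold_incl; auto. Qed.

Lemma ranking_fold_active n adj S y : forall l M p,
  In p (fold_left (ranking_step n adj S y) l M) -> In p M \/ In (fst p) l.
Proof.
  induction l as [|w l IH]; intros M p H; simpl in *; auto.
  destruct (IH _ _ H) as [H1|H1]; auto.
  destruct (ranking_step_cases n adj S y M w) as [E|[m [_ [_ [_ E]]]]]; rewrite E in H1; auto.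
  destruct H1 as [<-|H1]; simpl; auto.
Qed.

Lemma matched_before_deadline_passive n adj S y l x : ~ In x l ->
  matchedb (fold_left (ranking_step n adj S y) l []) x = true ->
  passive (fold_left (ranking_step n adj S y) l []) x.
Proof.
  intros Hx Hm. apply matchedb_endpoints, in_flat_map in Hm.
  destruct Hm as [[a b] [Hp Hin]]. apply passive_In.
  destruct (ranking_fold_active n adj S y l [] (a, b) Hp) as [[]|Ha]. simpl in *.
  destruct Hin as [->|[->|[]]]; [contradiction|eauto].
Qed.

Definition matching_within n S M :=
  NoDup (endpoints M) /\ forall x, In x (endpoints M) -> (x < n)%nat /\ S x = true.

Lemma matching_within_nil n S : matching_within n S [].
Proof. split; [constructor|intros x []]. Qed.

Lemma matching_within_notin n S M x : matching_within n S M -> S x = false -> ~ In x (endpoints M).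
Proof. intros [_ H] Hx Hin. destruct (H x Hin). congruence. Qed.

Lemma ranking_step_within n adj S y M w : (forall a, adj a a = false) -> (w < n)%nat ->
  matching_within n S M -> matching_within n S (ranking_step n adj S y M w).
Proof.
  intros Hirr Hw [H1 H2].
  destruct (ranking_step_cases n adj S y M w)
    as [->|[m [[[Hmn [HSm [Hadj Hmm]]] _] [HSw [Hmw ->]]]]]; [split; auto|].
  rewrite matchedb_false_endpoints in Hmm, Hmw. unfold matching_within; rewrite endpoints_cons.
  split.
  - constructor; [|constructor; auto].
    intros [E|E]; [subst; rewrite Hirr in Hadj; discriminate|contradiction].
  - intros x [<-|[<-|Hx]]; auto.
Qed.

Lemma ranking_fold_within n adj S y : (forall a, adj a a = false) -> forall l M,
  (forall w, In w l -> (w < n)%nat) -> matching_within n S M ->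
  matching_within n S (fold_left (ranking_step n adj S y) l M).
Proof.
  intros Hirr; induction l as [|w l IH]; intros M Hl HM; simpl; auto.
  apply IH; [intros; apply Hl; simpl; auto|].
  apply ranking_step_within; auto. apply Hl; simpl; auto.
Qed.


Lemma find_none {A} (f : A -> bool) l : (forall x, In x l -> f x = false) -> find f l = None.
Proof.
  induction l as [|x l IH]; intros H; simpl; auto.
  rewrite H; simpl; auto. apply IH; intros; apply H; simpl; auto.
Qed.

Lemma find_endpoint_none (sel : nat * nat -> nat) M b :
  (forall p, In (sel p) [fst p; snd p]) -> ~ In b (endpoints M) ->
  find (fun p => Nat.eqb (sel p) b) M = None.
Proof.
  intros Hsel H. apply find_none. intros p Hp. apply Nat.eqb_neq. intros <-.
  apply H, in_flat_map. exists p; auto.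
Qed.

Lemma find_active M a b : NoDup (endpoints M) -> In (a, b) M ->
  find (fun p => Nat.eqb (fst p) a) M = Some (a, b).
Proof.
  induction M as [|[c d] M IH]; intros Hnd H; [destruct H|].
  rewrite endpoints_cons in Hnd. inversion Hnd as [|? ? Hc Hnd']; subst.
  inversion Hnd' as [|? ? Hd Hnd'']; subst.
  simpl. destruct H as [H|H].
  - inversion H; subst. rewrite Nat.eqb_refl; auto.
  - destruct (Nat.eqb_spec c a) as [->|Hne]; auto.
    exfalso. apply Hc. right. apply (In_endpoints _ _ _ H).
Qed.

Lemma find_passive M a b : NoDup (endpoints M) -> In (a, b) M ->
  find (fun p => Nat.eqb (fst p) b) M = None /\ find (fun p => Nat.eqb (snd p) b) M = Some (a, b).
Proof.
  induction M as [|[c d] M IH]; intros Hnd H; [destruct H|].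
  rewrite endpoints_cons in Hnd. inversion Hnd as [|? ? Hc Hnd']; subst.
  inversion Hnd' as [|? ? Hd Hnd'']; subst.
  simpl. destruct H as [H|H].
  - inversion H; subst. rewrite Nat.eqb_refl.
    destruct (Nat.eqb_spec a b) as [->|_]; [exfalso; apply Hc; simpl; auto|].
    split; auto. apply find_endpoint_none; simpl; auto.
  - destruct (In_endpoints _ _ _ H) as [Ha Hb].
    destruct (Nat.eqb_spec c b) as [->|_]; [exfalso; apply Hc; right; auto|].
    destruct (Nat.eqb_spec d b) as [->|_]; [contradiction|auto].
Qed.

Lemma alpha_matched_pair g z M a b : NoDup (endpoints M) -> In (a, b) M ->
  alpha g z M a = 1 - g (z b) /\ alpha g z M b = g (z b).
Proof.
  intros Hnd H. unfold alpha. rewrite (find_active M a b Hnd H).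
  destruct (find_passive M a b Hnd H) as [-> ->]. auto.
Qed.

Lemma alpha_nonneg g z M w : (forall x, 0 <= x <= 1 -> 0 <= g x <= 1) ->
  (forall x, In x (endpoints M) -> 0 <= z x <= 1) -> 0 <= z w <= 1 -> 0 <= alpha g z M w.
Proof.
  intros Hg Hz Hw. unfold alpha.
  destruct (find (fun p => Nat.eqb (fst p) w) M) as [[a b]|] eqn:E1.
  - apply find_some in E1. destruct E1 as [E1 _]. apply In_endpoints in E1.
    pose proof (Hg _ (Hz _ (proj2 E1))). lra.
  - destruct (find (fun p => Nat.eqb (snd p) w) M); [apply Hg; auto|lra].
Qed.

(** * Stability of Ranking *)

Lemma upd_eq y w t : upd y w t w = t.
Proof. unfold upd; rewrite Nat.eqb_refl; auto. Qed.

Lemma upd_neq y w t x : x <> w -> upd y w t x = y x.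
Proof. intros H; unfold upd; apply Nat.eqb_neq in H; rewrite H; auto. Qed.

Lemma ranking_step_ext n adj S y y' M w :
  (forall a b, candidate n adj S M w a -> candidate n adj S M w b -> (rank_lt y a b <-> rank_lt y' a b)) ->
  ranking_step n adj S y M w = ranking_step n adj S y' M w.
Proof.
  intros H.
  destruct (ranking_step_spec n adj S y M w) as [[E1 H1]|[[E1 [N1 H1]]|[E1 [m [Hm H1]]]]];
  destruct (ranking_step_spec n adj S y' M w) as [[E2 H2]|[[E2 [N2 H2]]|[E2 [m' [Hm' H2]]]]];
  rewrite H1, H2; auto; try congruence.
  - exfalso; apply N1 with m'; apply Hm'.
  - exfalso; apply N2 with m; apply Hm.
  - do 2 f_equal. apply (least_candidate_unique n adj S S M M w w y y' m m'); auto.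
    + apply Hm'.
    + apply Hm.
    + apply H; [apply Hm'|apply Hm].
Qed.

Lemma ranking_fold_ext n adj S y y' : forall l M,
  (forall a b, (a < n)%nat -> (b < n)%nat -> S a = true -> S b = true ->
     (rank_lt y a b <-> rank_lt y' a b)) ->
  fold_left (ranking_step n adj S y) l M = fold_left (ranking_step n adj S y') l M.
Proof.
  induction l as [|w l IH]; intros M H; simpl; auto.
  rewrite (ranking_step_ext n adj S y y'); auto.
  intros a b [? [? _]] [? [? _]]; auto.
Qed.

Lemma ranking_fold_ext_on n adj S y y' l M :
  (forall x, S x = true -> y x = y' x) ->
  fold_left (ranking_step n adj S y) l M = fold_left (ranking_step n adj S y') l M.
Proof. intros H. apply ranking_fold_ext. intros; apply rank_lt_ext; auto. Qed.

Lemma ranking_ext_on n adj ord S y y' :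
  (forall x, S x = true -> y x = y' x) -> ranking n adj ord S y = ranking n adj ord S y'.
Proof. apply ranking_fold_ext_on. Qed.


Definition strictly_same_side (p t t0 : R) : Prop := (p < t /\ p < t0) \/ (t < p /\ t0 < p).

Lemma rank_lt_upd_stable y v t t0 a b :
  (a <> v -> strictly_same_side (y a) t t0) -> (b <> v -> strictly_same_side (y b) t t0) ->
  (rank_lt (upd y v t) a b <-> rank_lt (upd y v t0) a b).
Proof.
  intros Ha Hb. unfold rank_lt.
  destruct (Nat.eq_dec a v) as [->|hav]; destruct (Nat.eq_dec b v) as [->|hbv];
    rewrite ?upd_eq, ?upd_neq by auto.
  - split; intros [h|[_ h]]; lia || lra.
  - destruct (Hb hbv) as [[]|[]]; lra.
  - destruct (Ha hav) as [[]|[]]; lra.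
  - tauto.
Qed.

Lemma strictly_same_side_outside p A B t t0 :
  A < t < B -> A < t0 < B -> ~ (A < p < B) -> strictly_same_side p t t0.
Proof.
  intros Ht Ht0 Hp. unfold strictly_same_side.
  destruct (Rle_dec p A); [left; lra|]. destruct (Rle_dec B p); [right; lra|]. exfalso; apply Hp; lra.
Qed.

Lemma minus1_neq v z : z <> v -> minus1 v z = true.
Proof. intros H. unfold minus1. apply Nat.eqb_neq in H. rewrite H; auto. Qed.

Lemma minus1_self v : minus1 v v = false.
Proof. unfold minus1. rewrite Nat.eqb_refl; auto. Qed.

Lemma minus1_candidate n adj M w v z :
  candidate n adj (minus1 v) M w z -> z <> v /\ candidate n adj allv M w z.
Proof.
  intros [h1 [h2 h3]]. split; [intros ->; rewrite minus1_self in h2; discriminate|].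
  repeat split; auto; apply h3.
Qed.

Section AddVertex.
Variables (n : nat) (adj : nat -> nat -> bool) (S S' : nat -> bool) (y : nat -> R) (x : nat).
Hypothesis S'_S : forall z, z <> x -> S' z = S z.
Hypothesis S_x : S x = false.

Lemma candidate_add_vertex M w z : z <> x -> (candidate n adj S' M w z <-> candidate n adj S M w z).
Proof. intros Hz. unfold candidate. rewrite S'_S; tauto. Qed.

Lemma ranking_step_add_vertex M w : w <> x ->
  ranking_step n adj S' y M w = ranking_step n adj S y M w \/
  ranking_step n adj S' y M w = (w, x) :: M.
Proof.
  intros Hw.
  assert (HSc : forall z, candidate n adj S M w z -> z <> x) by (intros z [_ [h _]] ->; congruence).
  destruct (ranking_step_spec n adj S' y M w) as [[E1 H1]|[[E1 [N1 H1]]|[E1 [m [Hm H1]]]]];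
  destruct (ranking_step_spec n adj S y M w) as [[E2 H2]|[[E2 [N2 H2]]|[E2 [m' [Hm' H2]]]]];
  rewrite H1, H2; auto; try (rewrite S'_S in E1 by auto; congruence).
  - exfalso. apply N1 with m'. pose proof (proj1 Hm') as Hc.
    apply (candidate_add_vertex M w m' (HSc _ Hc)). exact Hc.
  - destruct (Nat.eq_dec m x) as [->|Hne]; auto. exfalso. apply N2 with m.
    apply (candidate_add_vertex M w m Hne). apply Hm.
  - destruct (Nat.eq_dec m x) as [->|Hne]; auto. left. do 2 f_equal.
    pose proof (proj1 Hm') as Hc.
    apply (least_candidate_unique n adj S' S M M w w y y m m'); auto; try tauto.
    + apply (candidate_add_vertex M w m' (HSc _ Hc)). exact Hc.
    + apply (candidate_add_vertex M w m Hne). apply Hm.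
Qed.

Lemma ranking_fold_add_vertex (Hirr : forall a, adj a a = false) : forall l M,
  ~ In x l -> (forall w, In w l -> (w < n)%nat) -> matching_within n S M ->
  passive (fold_left (ranking_step n adj S' y) l M) x \/
  fold_left (ranking_step n adj S' y) l M = fold_left (ranking_step n adj S y) l M.
Proof.
  induction l as [|w l IH]; intros M Hl Hn HM; simpl; auto.
  assert (Hw : w <> x) by (intros ->; apply Hl; simpl; auto).
  destruct (ranking_step_add_vertex M w Hw) as [E|E]; rewrite E.
  - apply IH; simpl in *; auto. apply ranking_step_within; auto.
  - left. apply ranking_fold_passive, passive_In. exists w; simpl; auto.
Qed.

End AddVertex.

Lemma ranking_fold_remove_two n adj y u v (Hirr : forall a, adj a a = false) : u <> v ->
  forall l M, ~ In u l -> ~ In v l -> (forall w, In w l -> (w < n)%nat) ->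
  matching_within n (minus1 v) M -> matching_within n (minus1 u) M ->
  ~ passive (fold_left (ranking_step n adj (minus1 v) y) l M) u ->
  ~ passive (fold_left (ranking_step n adj (minus1 u) y) l M) v ->
  fold_left (ranking_step n adj allv y) l M = fold_left (ranking_step n adj (minus1 v) y) l M /\
  fold_left (ranking_step n adj allv y) l M = fold_left (ranking_step n adj (minus1 u) y) l M.
Proof.
  intros Huv. induction l as [|w l IH]; intros M Hu Hv Hn HM1 HM2 N1 N2; simpl in *; auto.
  assert (Hwu : w <> u) by auto. assert (Hwv : w <> v) by auto.
  assert (HSv : forall z, z <> v -> allv z = minus1 v z) by (intros; rewrite minus1_neq; auto).
  assert (HSu : forall z, z <> u -> allv z = minus1 u z) by (intros; rewrite minus1_neq; auto).
  destruct (ranking_step_add_vertex n adj (minus1 v) allv y v HSv (minus1_self v) M w Hwv) as [E1|E1];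
  destruct (ranking_step_add_vertex n adj (minus1 u) allv y u HSu (minus1_self u) M w Hwu) as [E2|E2].
  - rewrite <- E1 in N1. rewrite <- E2 in N2. rewrite <- E1, <- E2.
    apply IH; auto; [rewrite E1|rewrite E2]; apply ranking_step_within; auto.
  - exfalso. apply N1. rewrite <- E1, E2.
    apply ranking_fold_passive, passive_In. exists w; simpl; auto.
  - exfalso. apply N2. rewrite <- E2, E1.
    apply ranking_fold_passive, passive_In. exists w; simpl; auto.
  - rewrite E1 in E2. inversion E2. congruence.
Qed.

Lemma ranking_step_choice n adj y M u v : u <> v -> (v < n)%nat -> adj u v = true ->
  matching_within n (minus1 v) M -> matchedb M u = false ->
  exists r, ranking_step n adj allv y M u = (u, r) :: M /\
    (r = v \/ (least_candidate n adj (minus1 v) M u y r /\ rank_lt y r v)).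
Proof.
  intros Huv Hv Hadj HM Hu.
  assert (Hvc : candidate n adj allv M u v).
  { repeat split; auto. apply matchedb_false_endpoints.
    apply (matching_within_notin n (minus1 v)); auto. apply minus1_self. }
  destruct (ranking_step_spec n adj allv y M u) as [[E1 H1]|[[E1 [N1 H1]]|[E1 [m [Hm H1]]]]].
  - unfold allv in E1; rewrite Hu in E1; discriminate.
  - exfalso; apply (N1 v Hvc).
  - exists m; split; auto. destruct (Nat.eq_dec m v) as [->|Hne]; auto. right.
    destruct Hm as [[Hm1 [_ [Hm3 Hm4]]] Hmin]. split.
    + split; [repeat split; auto; apply minus1_neq; auto|].
      intros z Hz. apply Hmin, (minus1_candidate n adj M u v z Hz).
    + destruct (Hmin v Hvc) as [->|h]; [congruence|auto].
Qed.

(** * Lowering its own rank keeps a vertex passive *)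

Lemma ranking_step_active_stays n adj S y M w x : matchedb M x = true -> ~ passive M x ->
  matchedb (ranking_step n adj S y M w) x = true /\ ~ passive (ranking_step n adj S y M w) x.
Proof.
  intros H1 H2.
  destruct (ranking_step_cases n adj S y M w) as [->|[m [[[_ [_ [_ Hm]]] _] [_ [_ ->]]]]]; auto.
  split.
  - apply matchedb_endpoints; rewrite endpoints_cons; simpl; right; right.
    apply matchedb_endpoints; auto.
  - rewrite passive_In. intros [a [E|E]]; [inversion E; subst; congruence|].
    apply H2, passive_In; eauto.
Qed.

(* Invariant relating the runs with [y x = s'] (first list) and [y x = s > s'] (second list):
   either [x] is already passive in the first, or the runs agree while [x] is unmatched,
   or [x] is already active in the second. *)
Definition lower_rank_inv (x : nat) (A B : list (nat * nat)) : Prop :=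
  passive A x \/ (A = B /\ ~ passive B x) \/ (matchedb B x = true /\ ~ passive B x).

Lemma lower_rank_inv_step n adj S y x s s' M1 M2 w : s' < s -> lower_rank_inv x M1 M2 ->
  lower_rank_inv x (ranking_step n adj S (upd y x s') M1 w) (ranking_step n adj S (upd y x s) M2 w).
Proof.
  intros Hss [H|[[-> H]|[H1 H2]]].
  - left. exact (ranking_fold_passive n adj S (upd y x s') [w] M1 x H).
  - destruct (matchedb M2 x) eqn:Em; [right; right; apply ranking_step_active_stays; auto|].
    assert (HI : lower_rank_inv x M2 M2) by (right; left; auto).
    destruct (ranking_step_spec n adj S (upd y x s') M2 w) as [[E1 H1]|[[E1 [N1 H1]]|[E1 [m' [Hm' H1]]]]];
    destruct (ranking_step_spec n adj S (upd y x s) M2 w) as [[E2 H2]|[[E2 [N2 H2]]|[E2 [m [Hm H2]]]]];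
    rewrite H1, H2; try (exfalso; congruence); auto.
    + exfalso; apply N1 with m; apply Hm.
    + exfalso; apply N2 with m'; apply Hm'.
    + destruct (Nat.eq_dec m' x) as [->|Hm'x].
      { left. apply passive_In. exists w; simpl; auto. }
      assert (Hmx : m <> x).
      { intros ->. destruct Hm as [Hc Hmin], Hm' as [Hc' Hmin'].
        destruct (Hmin m' Hc') as [h|h]; [congruence|].
        destruct (Hmin' x Hc) as [h'|h']; [congruence|].
        apply rank_lt_le in h, h'. rewrite upd_eq, upd_neq in h, h' by auto. lra. }
      assert (m = m').
      { apply (least_candidate_unique n adj S S M2 M2 w w (upd y x s) (upd y x s') m m');
          auto; [apply Hm'|apply Hm|apply rank_lt_ext; rewrite !upd_neq; auto]. }
      subst. right; left; split; auto.
      rewrite passive_In. intros [a [E|E]]; [inversion E; congruence|].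
      apply H, passive_In; eauto.
  - right; right. apply ranking_step_active_stays; auto.
Qed.

Lemma passive_lower_rank n adj ord S y x s s' : s' <= s ->
  passive (ranking n adj ord S (upd y x s)) x -> passive (ranking n adj ord S (upd y x s')) x.
Proof.
  intros [Hss|<-]; auto. unfold ranking.
  assert (Hfold : forall l M1 M2, lower_rank_inv x M1 M2 ->
    lower_rank_inv x (fold_left (ranking_step n adj S (upd y x s')) l M1)
                     (fold_left (ranking_step n adj S (upd y x s)) l M2)).
  { induction l as [|w l IH]; intros M1 M2 H; simpl; auto. apply IH, lower_rank_inv_step; auto. }
  assert (H0 : lower_rank_inv x [] []).
  { right; left; split; [reflexivity|]. rewrite passive_In; intros [a []]. }
  intros Hp. destruct (Hfold ord _ _ H0) as [h|[[_ h]|[_ h]]]; auto; contradiction.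
Qed.


Section MarginalRank.
Variables (n : nat) (adj : nat -> nat -> bool) (ord : list nat) (S : nat -> bool) (y : nat -> R).
Variables (x : nat) (m : R).
Hypothesis Hm : is_marginal_rank n adj ord S y x m.

Lemma marginal_rank_range : 0 <= m <= 1.
Proof. destruct Hm as [[->|[h _]] _]; lra. Qed.

Lemma not_passive_above_marginal_rank s : m < s -> s <= 1 ->
  ~ passive (ranking n adj ord S (upd y x s)) x.
Proof.
  intros Hms Hs1 Hp. pose proof marginal_rank_range.
  assert (Hb : passive_below n adj ord S y x s).
  { split; [lra|]. exists s; split; [lra|].
    intros t Ht _. apply passive_lower_rank with s; [lra|auto]. }
  apply (proj2 Hm) in Hb. lra.
Qed.

Lemma passive_below_marginal_rank t : 0 <= t < m ->
  passive (ranking n adj ord S (upd y x t)) x.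
Proof.
  destruct Hm as [[->|[Hm1 [eps [He Hp]]]] _]; intros Ht; [lra|].
  apply passive_lower_rank with (Rmax t (m - eps / 2)); [apply Rmax_l|].
  apply Hp; [split|]; [|apply Rmax_lub_lt; lra|].
  - apply Rlt_le_trans with (m - eps / 2); [lra|apply Rmax_r].
  - apply Rle_trans with t; [lra|apply Rmax_l].
Qed.

Lemma marginal_rank_ge c : 0 < c <= 1 ->
  (forall t, 0 <= t < c -> passive (ranking n adj ord S (upd y x t)) x) -> c <= m.
Proof.
  intros Hc H. apply (proj2 Hm). split; auto. exists c; split; [lra|].
  intros t Ht Ht0. apply H; lra.
Qed.

End MarginalRank.

(** * Removing a vertex from a bipartite instance *)

Lemma bool_neq_neq (a b c : bool) : a <> b -> b <> c -> a = c.
Proof. destruct a, b, c; congruence. Qed.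

Section Domination.
Variables (n : nat) (adj : nat -> nat -> bool) (side : nat -> bool) (v : nat) (y : nat -> R).
Hypothesis Hside : forall a b, (a < n)%nat -> (b < n)%nat -> adj a b = true -> side a <> side b.

(* Compared with [G], the run on [G - v] has fewer free vertices on the side of [v] and more
   on the other side; this is the alternating-path argument of the paper. *)
Definition dominates (MR MP : list (nat * nat)) : Prop :=
  (forall a, (a < n)%nat -> side a = side v -> a <> v ->
     matchedb MP a = false -> matchedb MR a = false) /\
  (forall b, (b < n)%nat -> side b <> side v ->
     matchedb MR b = false -> matchedb MP b = false).

Lemma candidate_side M S w z : (w < n)%nat -> candidate n adj S M w z -> side z <> side w.
Proof. intros Hw [Hz [_ [Ha _]]] E. apply (Hside w z); auto. Qed.

Section Step.
Variables (MR MP : list (nat * nat)) (w : nat).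
Hypotheses (Hw : (w < n)%nat) (Hwv : w <> v) (Hdom : dominates MR MP).

Lemma dominates_candidate_other z : side z <> side v ->
  candidate n adj allv MR w z -> candidate n adj (minus1 v) MP w z.
Proof.
  intros Hs [h1 [_ [h3 h4]]]. repeat split; auto.
  - apply minus1_neq. intros ->. auto.
  - apply (proj2 Hdom); auto.
Qed.

Lemma dominates_candidate_same z : side z = side v ->
  candidate n adj (minus1 v) MP w z -> candidate n adj allv MR w z.
Proof.
  intros Hs Hc. destruct (minus1_candidate n adj MP w v z Hc) as [Hzv [h1 [h2 [h3 h4]]]].
  repeat split; auto. apply (proj1 Hdom); auto.
Qed.

Lemma dominates_step_same_side : side w = side v ->
  dominates (ranking_step n adj allv y MR w) (ranking_step n adj (minus1 v) y MP w).
Proof.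
  intros Hsw. destruct Hdom as [IA IB].
  assert (Hother : forall S M z, candidate n adj S M w z -> side z <> side v)
    by (intros S M z Hz; rewrite <- Hsw; apply (candidate_side M S); auto).
  unfold dominates.
  destruct (ranking_step_spec n adj allv y MR w) as [[E1 ->]|[[E1 [N1 ->]]|[E1 [r [Hr ->]]]]];
  destruct (ranking_step_spec n adj (minus1 v) y MP w) as [[E2 ->]|[[E2 [N2 ->]]|[E2 [p [Hp ->]]]]];
  unfold allv in E1; rewrite minus1_neq in E2 by auto; simpl in E1, E2;
  apply eq_sym, Bool.negb_sym in E1; apply eq_sym, Bool.negb_sym in E2; simpl in E1, E2;
  try (split; assumption).
  - rewrite (IA w Hw Hsw Hwv E2) in E1; discriminate.
  - assert (Hpm : matchedb MR p = true).
    { destruct (matchedb MR p) eqn:E; auto. exfalso. apply (N1 p).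
      destruct Hp as [[h1 [_ [h3 _]]] _]. repeat split; auto. }
    split; intros a Ha Hs; rewrite matchedb_cons_false; [intros Hav [_ [_ Hu]]; auto|].
    intros Hu. repeat split; [congruence|congruence|auto].
  - split; intros a Ha Hs; [intros Hav Hu|rewrite matchedb_cons_false; intros [_ [_ Hu]]; auto].
    apply matchedb_cons_false. repeat split; [congruence| |auto].
    intros ->. apply (Hother _ _ _ (proj1 Hr)); auto.
  - exfalso. apply (N2 r), dominates_candidate_other, Hr. apply (Hother _ _ _ (proj1 Hr)).
  - split; intros a Ha Hs.
    + intros Hav Hu. apply matchedb_cons_false in Hu. destruct Hu as [h1 [h2 h3]].
      apply matchedb_cons_false. repeat split; auto.
      intros ->. apply (Hother _ _ _ (proj1 Hr)); auto.
    + intros Hu. apply matchedb_cons_false in Hu. destruct Hu as [h1 [h2 h3]].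
      apply matchedb_cons_false. repeat split; auto. intros ->. apply h2. symmetry.
      apply (least_candidate_unique n adj allv (minus1 v) MR MP w w y y r p Hr Hp); try tauto.
      * destruct Hp as [[? [? [? ?]]] _]. repeat split; auto.
      * apply dominates_candidate_other; [apply (Hother _ _ _ (proj1 Hr))|apply Hr].
Qed.

Lemma dominates_step_other_side : side w <> side v ->
  dominates (ranking_step n adj allv y MR w) (ranking_step n adj (minus1 v) y MP w).
Proof.
  intros Hsw. destruct Hdom as [IA IB].
  assert (Hsame : forall S M z, candidate n adj S M w z -> side z = side v)
    by (intros S M z Hz; apply bool_neq_neq with (side w); auto;
        apply (candidate_side M S); auto).
  unfold dominates.
  destruct (ranking_step_spec n adj allv y MR w) as [[E1 ->]|[[E1 [N1 ->]]|[E1 [r [Hr ->]]]]];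
  destruct (ranking_step_spec n adj (minus1 v) y MP w) as [[E2 ->]|[[E2 [N2 ->]]|[E2 [p [Hp ->]]]]];
  unfold allv in E1; rewrite minus1_neq in E2 by auto; simpl in E1, E2;
  apply eq_sym, Bool.negb_sym in E1; apply eq_sym, Bool.negb_sym in E2; simpl in E1, E2;
  try (split; assumption).
  - split; intros a Ha Hs; [rewrite matchedb_cons_false; intros Hav [_ [_ Hu]]; auto|].
    intros Hu. apply matchedb_cons_false. repeat split; [congruence| |auto].
    intros ->. apply Hs, (Hsame _ _ _ (proj1 Hp)).
  - exfalso. apply (N1 p), dominates_candidate_same, Hp. apply (Hsame _ _ _ (proj1 Hp)).
  - rewrite (IB w Hw Hsw E1) in E2; discriminate.
  - split; intros a Ha Hs.
    + intros Hav Hu. apply matchedb_cons_false. repeat split; [congruence| |auto].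
      intros ->. apply (N2 r). destruct Hr as [[? [_ [? _]]] _]. repeat split; auto.
      apply minus1_neq; auto.
    + rewrite matchedb_cons_false. intros [_ [_ Hu]]; auto.
  - split; intros a Ha Hs.
    + intros Hav Hu. apply matchedb_cons_false in Hu. destruct Hu as [h1 [h2 h3]].
      apply matchedb_cons_false. repeat split; [congruence| |auto]. intros ->. apply h2.
      apply (least_candidate_unique n adj allv (minus1 v) MR MP w w y y r p Hr Hp); try tauto.
      * apply dominates_candidate_same, Hp. apply (Hsame _ _ _ (proj1 Hp)).
      * destruct Hr as [[? [? [? ?]]] _]. repeat split; auto. apply minus1_neq; auto.
    + intros Hu. apply matchedb_cons_false in Hu. destruct Hu as [h1 [h2 h3]].
      apply matchedb_cons_false. repeat split; auto.
      intros ->. apply Hs, (Hsame _ _ _ (proj1 Hp)).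
Qed.

End Step.

Lemma dominates_fold : forall l MR MP, (forall w, In w l -> (w < n)%nat /\ w <> v) ->
  dominates MR MP ->
  dominates (fold_left (ranking_step n adj allv y) l MR) (fold_left (ranking_step n adj (minus1 v) y) l MP).
Proof.
  induction l as [|w l IH]; intros MR MP Hl HI; simpl; auto.
  destruct (Hl w) as [h1 h2]; simpl; auto.
  apply IH; [intros; apply Hl; simpl; auto|].
  destruct (Bool.bool_dec (side w) (side v));
    [apply dominates_step_same_side|apply dominates_step_other_side]; auto.
Qed.

End Domination.

(** * Riemann integrability *)

Lemma StepFun_ext (f f' : R -> R) a b (p : IsStepFun f a b) : a <= b ->
  (forall x, a < x < b -> f x = f' x) ->
  {p' : IsStepFun f' a b | RiemannInt_SF (mkStepFun p') = RiemannInt_SF (mkStepFun p)}.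
Proof.
  intros hab Heq. destruct p as [l [lf [H1 [H2 [H3 [H4 H5]]]]]].
  assert (H' : adapted_couple f' a b l lf).
  { do 4 (split; auto). intros i Hi x Hx. rewrite <- (H5 i Hi x Hx). symmetry. apply Heq.
    rewrite Rmin_left in H2 by lra. rewrite Rmax_right in H3 by lra.
    destruct (RList_P6 l) as [HR _]. specialize (HR H1).
    assert (pos_Rl l 0 <= pos_Rl l i) by (apply HR; lia).
    assert (pos_Rl l (S i) <= pos_Rl l (pred (length l))) by (apply HR; lia).
    unfold open_interval in Hx. lra. }
  exists (existT _ l (existT _ lf H')). reflexivity.
Qed.

Lemma StepFun_const (f : R -> R) a b c : a <= b -> (forall x, a < x < b -> f x = c) ->
  {p : IsStepFun f a b | RiemannInt_SF (mkStepFun p) = c * (b - a)}.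
Proof.
  intros hab Hf.
  assert (H : adapted_couple f a b [a; b] [c]).
  { split; [|split; [|split; [|split]]]; simpl; try reflexivity.
    - intros i Hi. simpl in Hi. destruct i; [simpl; lra|lia].
    - rewrite Rmin_left; lra.
    - rewrite Rmax_right; lra.
    - intros i Hi x Hx. destruct i; [apply Hf, Hx|simpl in Hi; lia]. }
  exists (existT _ [a; b] (existT _ [c] H)).
  unfold RiemannInt_SF. simpl. destruct (Rle_dec a b); [ring|lra].
Qed.

Section Monotone.
Variable f : R -> R.
Hypothesis f_mono : forall a b, 0 <= a -> a <= b -> b <= 1 -> f a <= f b.

(* On [k] steps of width [h], [f] is squeezed between its values at the step ends; the
   error integrals telescope to [h * (f (a + k h) - f a)]. *)
Lemma monotone_step_approx h : 0 < h -> forall k a, 0 <= a -> a + INR k * h <= 1 ->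
  {phi : R -> R & {psi : R -> R & {pphi : IsStepFun phi a (a + INR k * h) &
   {ppsi : IsStepFun psi a (a + INR k * h) |
     (forall t, a <= t <= a + INR k * h -> Rabs (f t - phi t) <= psi t) /\
     RiemannInt_SF (mkStepFun ppsi) = h * (f (a + INR k * h) - f a)}}}}.
Proof.
  intros Hh. induction k as [|k IH]; intros a Ha Hk.
  - replace (a + INR 0 * h) with a by (simpl; ring).
    destruct (StepFun_const (fun _ => f a) a a (f a) (Rle_refl a)) as [p1 _]; [auto|].
    destruct (StepFun_const (fun _ => 0) a a 0 (Rle_refl a)) as [p2 I2]; [auto|].
    exists (fun _ => f a), (fun _ => 0), p1, p2. split.
    + intros t Ht. replace t with a by lra. rewrite Rminus_diag, Rabs_R0. lra.
    + rewrite I2. ring.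
  - assert (HS : a + INR (S k) * h = (a + h) + INR k * h) by (rewrite S_INR; ring).
    rewrite HS in Hk |- *.
    assert (Hk0 : 0 <= INR k * h) by (apply Rmult_le_pos; [apply pos_INR|lra]).
    destruct (IH (a + h)) as [phi' [psi' [pphi' [ppsi' [Hb Hi]]]]]; [lra|lra|].
    set (e := a + h + INR k * h) in *.
    set (phi := fun t => if Rlt_dec t (a + h) then f a else phi' t).
    set (psi := fun t => if Rlt_dec t (a + h) then f (a + h) - f a else psi' t).
    assert (Hl : forall (c : R) g x, x < a + h -> (if Rlt_dec x (a + h) then c else g x) = c)
      by (intros; destruct Rlt_dec; [auto|lra]).
    assert (Hr : forall (c : R) g x, a + h < x -> (if Rlt_dec x (a + h) then c else g x) = g x)
      by (intros; destruct Rlt_dec; [lra|auto]).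
    destruct (StepFun_const phi a (a + h) (f a)) as [p1 _]; [lra|intros; apply Hl; lra|].
    destruct (StepFun_ext phi' phi (a + h) e pphi') as [p2 _];
      [unfold e; lra|intros; symmetry; apply Hr; lra|].
    destruct (StepFun_const psi a (a + h) (f (a + h) - f a)) as [q1 I1]; [lra|intros; apply Hl; lra|].
    destruct (StepFun_ext psi' psi (a + h) e ppsi') as [q2 I2];
      [unfold e; lra|intros; symmetry; apply Hr; lra|].
    exists phi, psi, (StepFun_P46 p1 p2), (StepFun_P46 q1 q2). split.
    + intros t Ht. unfold phi, psi. destruct (Rlt_dec t (a + h)); [|apply Hb; lra].
      assert (f a <= f t) by (apply f_mono; lra).
      assert (f t <= f (a + h)) by (apply f_mono; unfold e in *; lra).
      rewrite Rabs_right by lra. lra.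
    + rewrite <- (StepFun_P43 q1 q2 (StepFun_P46 q1 q2)), I1, I2, Hi. ring.
Qed.

Lemma monotone_integrable A B : 0 <= A -> A <= B -> B <= 1 ->
  (forall x, 0 <= x <= 1 -> 0 <= f x <= 1) -> Riemann_integrable f A B.
Proof.
  intros HA HAB HB Hf. destruct (Rle_lt_or_eq_dec A B HAB) as [Hlt|<-]; [|apply RiemannInt_P7].
  intros eps. pose proof (cond_pos eps) as Heps.
  destruct (nfloor_ex ((B - A) / eps)) as [k Hk]; [apply Rdiv_le_0_compat; lra|].
  set (N := S k). assert (HN : (B - A) / eps < INR N) by (unfold N; rewrite S_INR; lra).
  assert (HNp : 0 < INR N) by (apply lt_0_INR; unfold N; lia).
  set (h := (B - A) / INR N).
  assert (Hh : 0 < h) by (unfold h; apply Rdiv_lt_0_compat; lra).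
  assert (He : A + INR N * h = B) by (unfold h; field; lra).
  assert (Hheps : h < eps).
  { unfold h. apply Rmult_lt_reg_r with (INR N / eps); [apply Rdiv_lt_0_compat; lra|].
    replace ((B - A) / INR N * (INR N / eps)) with ((B - A) / eps) by (field; lra).
    replace (eps * (INR N / eps)) with (INR N) by (field; lra). exact HN. }
  destruct (monotone_step_approx h Hh N A HA) as [phi [psi [pphi [ppsi [Hb Hi]]]]]; [lra|].
  revert pphi ppsi Hb Hi. rewrite He. intros pphi ppsi Hb Hi.
  exists (mkStepFun pphi), (mkStepFun ppsi). split.
  - intros t Ht. rewrite Rmin_left, Rmax_right in Ht by lra. apply Hb; lra.
  - rewrite Hi. assert (f A <= f B) by (apply f_mono; lra). pose proof (Hf A). pose proof (Hf B).
    rewrite Rabs_right by (apply Rle_ge, Rmult_le_pos; lra).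
    apply Rle_lt_trans with (h * 1); [apply Rmult_le_compat_l|]; lra.
Qed.

End Monotone.

Lemma integrable_off_breakpoints (f : R -> R) (P : list R) : forall A B, A <= B ->
  (forall a b, A <= a -> a < b -> b <= B -> (forall p, In p P -> ~ (a < p < b)) ->
     Riemann_integrable f a b) ->
  Riemann_integrable f A B.
Proof.
  induction P as [|p P IH]; intros A B HAB H.
  - destruct (Rle_lt_or_eq_dec A B HAB) as [h|<-]; [apply H; auto; lra|apply RiemannInt_P7].
  - assert (Hsub : forall A' B', A <= A' -> B' <= B -> A' <= B' -> ~ (A' < p < B') ->
      Riemann_integrable f A' B').
    { intros A' B' h1 h2 h3 hp. apply IH; auto. intros a b ha hab hb hP.
      apply H; [lra|auto|lra|]. intros q [<-|hq]; [lra|auto]. }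
    destruct (Rlt_dec A p) as [h1|h1]; [destruct (Rlt_dec p B) as [h2|h2]|];
      [apply RiemannInt_P24 with p| |]; apply Hsub; lra.
Qed.

Lemma Riemann_integrable_ext_open (f f' : R -> R) a b : a <= b ->
  (forall x, a < x < b -> f x = f' x) ->
  Riemann_integrable f a b -> Riemann_integrable f' a b.
Proof.
  intros hab H pr. apply ex_RInt_Reals_0. apply (ex_RInt_ext f).
  - intros x. rewrite Rmin_left, Rmax_right by lra. auto.
  - apply ex_RInt_Reals_1. exact pr.
Qed.

Lemma alpha_upd_integrable (g : R -> R) y v M w A B :
  (forall a b, 0 <= a -> a <= b -> b <= 1 -> g a <= g b) -> (forall x, 0 <= x <= 1 -> 0 <= g x <= 1) ->
  0 <= A -> A <= B -> B <= 1 ->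
  Riemann_integrable (fun t => alpha g (upd y v t) M w) A B.
Proof.
  intros Hgm Hgr HA HAB HB.
  pose proof (monotone_integrable g Hgm A B HA HAB HB Hgr) as Hg.
  assert (Hconst : forall x, x <> v -> forall c : R -> R,
    Riemann_integrable (fun t => c (upd y v t x)) A B).
  { intros x hx c. apply Riemann_integrable_ext with (fun _ => c (y x)).
    - intros t _. rewrite upd_neq; auto.
    - apply Riemann_integrable_const. }
  unfold alpha.
  destruct (find (fun p => Nat.eqb (fst p) w) M) as [[a b]|].
  - destruct (Nat.eq_dec b v) as [->|hb]; [|apply (Hconst b hb (fun r => 1 - g r))].
    apply Riemann_integrable_ext with (fun t => 1 + (-1) * g t).
    + intros t _. rewrite upd_eq. ring.
    + apply RiemannInt_P10; [apply Riemann_integrable_const|exact Hg].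
  - destruct (find (fun p => Nat.eqb (snd p) w) M); [|apply Riemann_integrable_const].
    destruct (Nat.eq_dec w v) as [->|hw]; [|apply (Hconst w hw g)].
    apply Riemann_integrable_ext with g; auto. intros t _. rewrite upd_eq; auto.
Qed.

Lemma RiemannInt_ge_const (f : R -> R) a b c (pr : Riemann_integrable f a b) :
  a <= b -> (forall x, a < x < b -> c <= f x) -> c * (b - a) <= RiemannInt pr.
Proof.
  intros hab H. rewrite <- (RiemannInt_const c a b (Riemann_integrable_const c a b)).
  apply RiemannInt_P19; auto.
Qed.

Lemma RiemannInt_ge_piecewise (f : R -> R) a b c1 c2 c3 (pr : Riemann_integrable f 0 1) :
  0 <= a <= b -> b <= 1 ->
  (forall x, 0 < x < a -> c1 <= f x) -> (forall x, a < x < b -> c2 <= f x) ->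
  (forall x, b < x < 1 -> c3 <= f x) ->
  c1 * a + c2 * (b - a) + c3 * (1 - b) <= RiemannInt pr.
Proof.
  intros Hab Hb H1 H2 H3.
  assert (pr0b : Riemann_integrable f 0 b) by (apply (RiemannInt_P22 pr); lra).
  assert (prb1 : Riemann_integrable f b 1) by (apply (RiemannInt_P23 pr); lra).
  assert (pr0a : Riemann_integrable f 0 a) by (apply (RiemannInt_P22 pr0b); lra).
  assert (prab : Riemann_integrable f a b) by (apply (RiemannInt_P23 pr0b); lra).
  rewrite <- (RiemannInt_P26 pr0b prb1 pr), <- (RiemannInt_P26 pr0a prab pr0b).
  pose proof (RiemannInt_ge_const f 0 a c1 pr0a ltac:(lra) H1).
  pose proof (RiemannInt_ge_const f a b c2 prab ltac:(lra) H2).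
  pose proof (RiemannInt_ge_const f b 1 c3 prb1 ltac:(lra) H3).
  lra.
Qed.

Section Instance.
Variables (n : nat) (adj : nat -> nat -> bool) (ord : list nat) (g : R -> R).
Variables (u v : nat) (y : nat -> R) (tau gam yu theta : R).
Variables (side : nat -> bool) (l1 l2 l3 : list nat).
Hypothesis Hirr : forall a, adj a a = false.
Hypothesis Hord_n : forall w, In w ord -> (w < n)%nat.
Hypothesis Hord_nodup : NoDup ord.
Hypothesis Hord : ord = l1 ++ u :: l2 ++ v :: l3.
Hypothesis Hside : forall a b, (a < n)%nat -> (b < n)%nat -> adj a b = true -> side a <> side b.
Hypothesis Hg_mono : forall a b, 0 <= a -> a <= b -> b <= 1 -> g a <= g b.
Hypothesis Hg_range : forall x, 0 <= x <= 1 -> 0 <= g x <= 1.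
Hypothesis Hg1 : g 1 = 1.
Hypotheses (Hu : (u < n)%nat) (Hv : (v < n)%nat) (Huv : adj u v = true).
Hypothesis Hy : forall x, (x < n)%nat -> x <> u -> x <> v -> 0 <= y x < 1.
Hypothesis Htau : is_marginal_rank n adj ord (minus1 v) y u tau.
Hypothesis Hgam : is_marginal_rank n adj ord (minus1 u) y v gam.
Hypothesis Hyu : 0 <= yu < 1.
Hypothesis Htheta : is_marginal_rank n adj ord allv (upd y u yu) v theta.
Hypothesis Htau_yu : tau < yu.

Let ranks (t : R) : nat -> R := upd (upd y u yu) v t.
Let matching (t : R) := ranking n adj ord allv (ranks t).
(* The state of Ranking on [G[S]] just before the deadline of [u]. *)
Let prefix (S : nat -> bool) (t : R) := fold_left (ranking_step n adj S (ranks t)) l1 [].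

Lemma u_neq_v : u <> v.
Proof. intros ->. rewrite Hirr in Huv. discriminate. Qed.

Lemma u_notin_prefix : ~ In u l1.
Proof. intros h. rewrite Hord in Hord_nodup. apply (NoDup_remove_2 _ _ _ Hord_nodup), in_app_iff; auto. Qed.

Lemma v_notin_prefix : ~ In v l1.
Proof.
  intros h. rewrite Hord, app_comm_cons, app_assoc in Hord_nodup.
  apply (NoDup_remove_2 _ _ _ Hord_nodup), in_app_iff. left; apply in_app_iff; auto.
Qed.

Lemma prefix_lt_n w : In w l1 -> (w < n)%nat.
Proof. intros h. apply Hord_n. rewrite Hord. apply in_app_iff; auto. Qed.

Lemma ranks_v t : ranks t v = t.
Proof. apply upd_eq. Qed.

Lemma ranks_u t : ranks t u = yu.
Proof. unfold ranks. rewrite upd_neq, upd_eq; auto using u_neq_v. Qed.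

Lemma ranks_off_v t t' x : x <> v -> ranks t x = ranks t' x.
Proof. intros h. unfold ranks. rewrite (upd_neq _ v t x h), (upd_neq _ v t' x h). reflexivity. Qed.

Lemma ranks_range t x : 0 <= t <= 1 -> (x < n)%nat -> 0 <= ranks t x <= 1.
Proof.
  intros Ht Hx. unfold ranks.
  destruct (Nat.eq_dec x v) as [->|h1]; [rewrite upd_eq; lra|rewrite upd_neq by auto].
  destruct (Nat.eq_dec x u) as [->|h2]; [rewrite upd_eq; lra|rewrite upd_neq by auto].
  pose proof (Hy x Hx h2 h1); lra.
Qed.

Lemma ranking_after_prefix S t : ranking n adj ord S (ranks t) =
  fold_left (ranking_step n adj S (ranks t)) (l2 ++ v :: l3)
    (ranking_step n adj S (ranks t) (prefix S t) u).
Proof. unfold ranking. rewrite Hord, fold_left_app. reflexivity. Qed.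

Lemma prefix_within S t : matching_within n S (prefix S t).
Proof. apply ranking_fold_within; auto using prefix_lt_n, matching_within_nil. Qed.

Lemma In_matching_of_step t r :
  ranking_step n adj allv (ranks t) (prefix allv t) u = (u, r) :: prefix allv t ->
  In (u, r) (matching t).
Proof.
  intros E. unfold matching. rewrite ranking_after_prefix, E. apply ranking_fold_incl. left; auto.
Qed.

Lemma passive_of_prefix S t x : passive (prefix S t) x -> passive (ranking n adj ord S (ranks t)) x.
Proof.
  intros Hp. rewrite ranking_after_prefix.
  apply ranking_fold_passive, (ranking_fold_passive n adj S (ranks t) [u]), Hp.
Qed.

Lemma alpha_matching_pair t a b : In (a, b) (matching t) ->
  alpha g (ranks t) (matching t) a = 1 - g (ranks t b) /\
  alpha g (ranks t) (matching t) b = g (ranks t b).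
Proof.
  apply alpha_matched_pair. apply (ranking_fold_within n adj allv (ranks t) Hirr ord []);
    auto using matching_within_nil.
Qed.

Lemma alpha_matching_nonneg t w : 0 <= t <= 1 -> (w < n)%nat ->
  0 <= alpha g (ranks t) (matching t) w.
Proof.
  intros Ht Hw. apply alpha_nonneg; auto using ranks_range.
  intros x Hx. apply ranks_range; auto.
  apply (ranking_fold_within n adj allv (ranks t) Hirr ord [] Hord_n (matching_within_nil n allv)).
  exact Hx.
Qed.

Lemma prefix_minus_v_indep t t' : prefix (minus1 v) t = prefix (minus1 v) t'.
Proof.
  apply ranking_fold_ext_on. intros x Hx. apply ranks_off_v.
  intros ->. rewrite minus1_self in Hx. discriminate.
Qed.

Lemma least_candidate_minus_v_indep M t t' r :
  least_candidate n adj (minus1 v) M u (ranks t) r -> least_candidate n adj (minus1 v) M u (ranks t') r.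
Proof.
  intros [Hr Hmin]. split; auto. intros z Hz. destruct (Hmin z Hz) as [->|h]; auto. right.
  refine (proj1 (rank_lt_ext (ranks t) (ranks t') r z _ _) h); apply ranks_off_v;
    [apply (minus1_candidate n adj M u v r Hr)|apply (minus1_candidate n adj M u v z Hz)].
Qed.

Lemma v_passive_unless_preceded t :
  matchedb (prefix (minus1 v) t) u = false ->
  (forall r, least_candidate n adj (minus1 v) (prefix (minus1 v) t) u (ranks t) r -> ~ rank_lt (ranks t) r v) ->
  passive (matching t) v.
Proof.
  intros Hfree Hprec.
  destruct (ranking_fold_add_vertex n adj (minus1 v) allv (ranks t) v
              (fun z h => eq_sym (minus1_neq v z h)) (minus1_self v) Hirr l1 []
              v_notin_prefix prefix_lt_n (matching_within_nil _ _)) as [Hp|Heq].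
  { apply passive_of_prefix, Hp. }
  destruct (ranking_step_choice n adj (ranks t) (prefix (minus1 v) t) u v u_neq_v Hv Huv
              (prefix_within _ _) Hfree) as [r [Er [->|[Hr Hrv]]]].
  - apply passive_In. exists u. apply In_matching_of_step. fold (prefix allv t) in Heq.
    rewrite Heq. exact Er.
  - exfalso. exact (Hprec r Hr Hrv).
Qed.

Lemma theta_bound t : matchedb (prefix (minus1 v) t) u = false ->
  (forall m0, least_candidate n adj (minus1 v) (prefix (minus1 v) t) u (ranks t) m0 -> ranks t m0 <= theta) /\
  ((forall q, ~ candidate n adj (minus1 v) (prefix (minus1 v) t) u q) -> theta = 1).
Proof.
  intros Hfree. pose proof (marginal_rank_range _ _ _ _ _ _ _ Htheta) as Hth.
  assert (Hfree' : forall t', matchedb (prefix (minus1 v) t') u = false)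
    by (intros t'; rewrite (prefix_minus_v_indep t' t); exact Hfree).
  split.
  - intros m0 Hm0. destruct (minus1_candidate _ _ _ _ _ _ (proj1 Hm0)) as [Hm0v [Hm0n _]].
    destruct (Rle_lt_dec (ranks t m0) 0) as [h|h]; [lra|].
    apply (marginal_rank_ge n adj ord allv (upd y u yu) v theta Htheta).
    { split; [exact h|]. rewrite (ranks_off_v t 0) by auto.
      apply (ranks_range 0); auto; lra. }
    intros t' Ht'. apply (v_passive_unless_preceded t' (Hfree' t')). intros r Hr Hrv.
    rewrite (prefix_minus_v_indep t' t) in Hr. apply (least_candidate_minus_v_indep _ t' t) in Hr.
    assert (r = m0) as ->.
    { apply (least_candidate_unique n adj _ _ _ _ u u _ _ r m0 Hr Hm0); try tauto;
        [apply Hm0|apply Hr]. }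
    apply rank_lt_le in Hrv. rewrite ranks_v, (ranks_off_v t' t) in Hrv by auto. lra.
  - intros Hnone. cut (1 <= theta); [lra|].
    apply (marginal_rank_ge n adj ord allv (upd y u yu) v theta Htheta); [lra|].
    intros t' Ht'. apply (v_passive_unless_preceded t' (Hfree' t')). intros r Hr _.
    rewrite (prefix_minus_v_indep t' t) in Hr. exact (Hnone r (proj1 Hr)).
Qed.

Lemma prefix_dominates t : dominates n side v (prefix allv t) (prefix (minus1 v) t).
Proof.
  apply dominates_fold; auto.
  - intros w hw; split; [apply prefix_lt_n; auto|intros ->; apply v_notin_prefix; auto].
  - split; intros; reflexivity.
Qed.

Lemma alpha_u_free t : 0 <= t <= 1 -> matchedb (prefix allv t) u = false ->
  theta = 1 \/ 1 - g theta <= alpha g (ranks t) (matching t) u.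
Proof.
  intros Ht EmR. pose proof (prefix_dominates t) as [_ IB].
  assert (Hsuv : side u <> side v) by (apply Hside; auto).
  assert (EmP : matchedb (prefix (minus1 v) t) u = false) by (apply IB; auto).
  destruct (theta_bound t EmP) as [TBa TBb].
  destruct (ranking_step_spec n adj (minus1 v) (ranks t) (prefix (minus1 v) t) u)
    as [[E1 _]|[[E1 [N1 _]]|[E1 [m0 [Hm0 _]]]]].
  - rewrite minus1_neq, EmP in E1 by apply u_neq_v. discriminate.
  - left; exact (TBb N1).
  - right. pose proof (TBa m0 Hm0) as Hm0theta.
    assert (HcR : candidate n adj allv (prefix allv t) u m0).
    { apply (dominates_candidate_same n adj side v _ _ u (prefix_dominates t)); [|apply Hm0].
      apply bool_neq_neq with (side u); auto.
      apply (candidate_side n adj side Hside _ _ u m0 Hu (proj1 Hm0)). }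
    destruct (ranking_step_spec n adj allv (ranks t) (prefix allv t) u)
      as [[F1 _]|[[F1 [N2 _]]|[F1 [r [Hr Er]]]]].
    + rewrite EmR in F1. discriminate.
    + exfalso; exact (N2 m0 HcR).
    + destruct (alpha_matching_pair t u r (In_matching_of_step t r Er)) as [-> _].
      assert (ranks t r <= ranks t m0)
        by (destruct (proj2 Hr m0 HcR) as [->|hh]; [lra|apply rank_lt_le, hh]).
      assert (g (ranks t r) <= g theta).
      { apply Hg_mono; [apply ranks_range; auto; apply Hr|lra|].
        apply (marginal_rank_range _ _ _ _ _ _ _ Htheta). }
      lra.
Qed.

Lemma alpha_u_lower t : 0 <= t <= 1 ->
  Rmin (g yu) (1 - g theta) <= alpha g (ranks t) (matching t) u.
Proof.
  intros Ht. destruct (matchedb (prefix allv t) u) eqn:EmR.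
  - assert (Hp : passive (matching t) u).
    { apply passive_of_prefix, matched_before_deadline_passive; auto using u_notin_prefix. }
    apply passive_In in Hp. destruct Hp as [a Ha].
    rewrite (proj2 (alpha_matching_pair t a u Ha)), ranks_u. apply Rmin_l.
  - destruct (alpha_u_free t Ht EmR) as [->|H]; [|pose proof (Rmin_r (g yu) (1 - g theta)); lra].
    rewrite Hg1. pose proof (alpha_matching_nonneg t u Ht Hu).
    pose proof (Rmin_r (g yu) (1 - 1)). lra.
Qed.

(* Above [gam], [v] is not passive in [G - u] before the deadline of [u]; since [yu > tau],
   neither is [u] in [G - v]: so [G] runs like both subgraphs until then. *)
Lemma prefix_agree_above_gamma t : gam < t <= 1 ->
  prefix allv t = prefix (minus1 v) t /\ prefix allv t = prefix (minus1 u) t.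
Proof.
  intros Ht. pose proof u_neq_v as Huv'.
  apply ranking_fold_remove_two; auto using u_notin_prefix, v_notin_prefix, prefix_lt_n, matching_within_nil.
  - intros Hp. apply (not_passive_above_marginal_rank n adj ord (minus1 v) y u tau Htau yu Htau_yu);
      [lra|].
    rewrite (ranking_ext_on n adj ord (minus1 v) (upd y u yu) (ranks t)).
    + apply passive_of_prefix, Hp.
    + intros x Hx. apply eq_sym, upd_neq. intros ->. rewrite minus1_self in Hx. discriminate.
  - intros Hp. apply (not_passive_above_marginal_rank n adj ord (minus1 u) y v gam Hgam t);
      [lra|lra|].
    rewrite (ranking_ext_on n adj ord (minus1 u) (upd y v t) (ranks t)).
    + apply passive_of_prefix, Hp.
    + intros x Hx. assert (x <> u) by (intros ->; rewrite minus1_self in Hx; discriminate).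
      unfold ranks. destruct (Nat.eq_dec x v) as [->|hxv]; [rewrite !upd_eq; auto|].
      rewrite !upd_neq; auto.
Qed.

Lemma u_choice_above_gamma t : gam < t <= 1 -> exists r, In (u, r) (matching t) /\
  (r = v \/ (ranks t r <= theta /\ ranks t r <= t)).
Proof.
  intros Ht. destruct (prefix_agree_above_gamma t Ht) as [Ev Eu].
  assert (Hfree : matchedb (prefix allv t) u = false).
  { apply matchedb_false_endpoints, (matching_within_notin n (minus1 u)); [rewrite Eu; apply prefix_within|].
    apply minus1_self. }
  destruct (ranking_step_choice n adj (ranks t) (prefix allv t) u v u_neq_v Hv Huv)
    as [r [Er Hr]]; [rewrite Ev; apply prefix_within|exact Hfree|].
  exists r. split; [apply In_matching_of_step, Er|].
  destruct Hr as [->|[Hr Hrv]]; auto. right. split.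
  - rewrite Ev in Hfree, Hr. apply (proj1 (theta_bound t Hfree)), Hr.
  - apply rank_lt_le in Hrv. rewrite ranks_v in Hrv. exact Hrv.
Qed.

Lemma alpha_sum_above_gamma t : gam < t <= 1 ->
  1 - g theta <= alpha g (ranks t) (matching t) u + alpha g (ranks t) (matching t) v.
Proof.
  intros Ht. pose proof (marginal_rank_range _ _ _ _ _ _ _ Hgam).
  pose proof (marginal_rank_range _ _ _ _ _ _ _ Htheta). pose proof (Hg_range theta).
  pose proof (alpha_matching_nonneg t v ltac:(lra) Hv).
  destruct (u_choice_above_gamma t Ht) as [r [HuM Hr]].
  destruct (alpha_matching_pair t u r HuM) as [-> Hv'].
  destruct Hr as [->|[Hr1 Hr2]]; [rewrite Hv'; lra|].
  assert (g (ranks t r) <= g theta); [|lra].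
  apply Hg_mono; [apply ranks_range|lra|lra]; [lra|].
  apply (ranking_fold_within n adj allv (ranks t) Hirr ord [] Hord_n (matching_within_nil n allv)).
  apply (In_endpoints _ _ _ HuM).
Qed.

Lemma alpha_sum_below_theta t : gam < t < theta ->
  1 <= alpha g (ranks t) (matching t) u + alpha g (ranks t) (matching t) v.
Proof.
  intros Ht. pose proof (marginal_rank_range _ _ _ _ _ _ _ Hgam).
  pose proof (marginal_rank_range _ _ _ _ _ _ _ Htheta).
  destruct (u_choice_above_gamma t ltac:(lra)) as [r [HuM Hr]].
  destruct (alpha_matching_pair t u r HuM) as [-> Hv'].
  destruct Hr as [->|[Hr1 Hr2]]; [rewrite Hv'; lra|].
  assert (Hp : passive (matching t) v)
    by (apply (passive_below_marginal_rank n adj ord allv (upd y u yu) v theta Htheta); lra).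
  apply passive_In in Hp. destruct Hp as [a Ha].
  rewrite (proj2 (alpha_matching_pair t a v Ha)), ranks_v.
  assert (g (ranks t r) <= g t); [|lra].
  apply Hg_mono; [apply ranks_range|lra|lra]; [lra|].
  apply (ranking_fold_within n adj allv (ranks t) Hirr ord [] Hord_n (matching_within_nil n allv)).
  apply (In_endpoints _ _ _ HuM).
Qed.

Let integrand (t : R) : R :=
  let z := ranks t in let M := ranking n adj ord allv z in alpha g z M u + alpha g z M v * indic gam t.

(* Between consecutive ranks of the other vertices (and [gam]), the matching is fixed and the
   integrand is an affine combination of [g t] and constants. *)
Lemma integrand_integrable_piece A B : 0 <= A -> A < B -> B <= 1 ->
  (forall p, In p (gam :: map (upd y u yu) (seq 0 n)) -> ~ (A < p < B)) ->
  Riemann_integrable integrand A B.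
Proof.
  intros HA HAB HB Hp. set (t0 := (A + B) / 2).
  assert (Ht0 : A < t0 < B) by (unfold t0; lra).
  apply Riemann_integrable_ext_open
    with (fun t => alpha g (ranks t) (matching t0) u + indic gam t0 * alpha g (ranks t) (matching t0) v);
    [lra| |].
  - intros t Ht. unfold integrand; cbv zeta. fold (matching t).
    assert (HM : matching t = matching t0).
    { apply ranking_fold_ext. intros a b ha hb _ _. apply rank_lt_upd_stable; intros;
        apply strictly_same_side_outside with A B; auto; apply Hp; right; apply in_map, in_seq; lia. }
    assert (Hind : indic gam t = indic gam t0).
    { destruct (strictly_same_side_outside gam A B t t0 Ht Ht0 (Hp gam (or_introl eq_refl)))
        as [[]|[]]; unfold indic; do 2 destruct Rlt_dec; auto; lra. }
    rewrite HM, Hind. ring.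
  - apply Riemann_integrable_plus; [|apply Riemann_integrable_scal];
      apply alpha_upd_integrable; auto; lra.
Qed.

Lemma integrand_integrable : Riemann_integrable integrand 0 1.
Proof.
  apply (integrable_off_breakpoints integrand (gam :: map (upd y u yu) (seq 0 n))); [lra|].
  intros a b ha hab hb hP. apply integrand_integrable_piece; auto; lra.
Qed.

Lemma integral_lower_bound : exists pr : Riemann_integrable integrand 0 1,
  RiemannInt pr >= 1 - gam - (1 - theta) * g theta + gam * Rmin (g yu) (1 - g theta).
Proof.
  exists integrand_integrable.
  pose proof (marginal_rank_range _ _ _ _ _ _ _ Htheta) as Hth.
  pose proof (marginal_rank_range _ _ _ _ _ _ _ Hgam) as Hga.
  pose proof (Hg_range theta Hth) as Hgth.
  assert (Hindic : forall t, indic gam t = if Rlt_dec gam t then 1 else 0) by reflexivity.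
  pose proof (RiemannInt_ge_piecewise integrand gam (Rmax gam theta)
    (Rmin (g yu) (1 - g theta)) 1 (1 - g theta) integrand_integrable) as Hint.
  apply Rle_ge. eapply Rle_trans; [|apply Hint].
  - destruct (Rle_dec gam theta);
      [rewrite Rmax_right by lra; nra|rewrite Rmax_left by lra; nra].
  - split; [lra|apply Rmax_l].
  - apply Rmax_lub; lra.
  - intros t Ht. unfold integrand; cbv zeta. rewrite Hindic.
    destruct (Rlt_dec gam t); [lra|]. rewrite Rmult_0_r, Rplus_0_r. apply alpha_u_lower; lra.
  - intros t Ht. unfold integrand; cbv zeta. rewrite Hindic.
    destruct (Rlt_dec gam t); [|lra]. rewrite Rmult_1_r. apply alpha_sum_below_theta.
    split; [lra|]. destruct (Rle_dec gam theta);
      [rewrite Rmax_right in Ht by lra|rewrite Rmax_left in Ht by lra]; lra.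
  - intros t Ht. pose proof (Rmax_l gam theta). unfold integrand; cbv zeta. rewrite Hindic.
    destruct (Rlt_dec gam t); [|lra]. rewrite Rmult_1_r. apply alpha_sum_above_gamma; lra.
Qed.

End Instance.

Theorem lemma4p3
  (n : nat) (adj : nat -> nat -> bool) (ord : list nat)
  (g : R -> R) (u v : nat) (y : nat -> R) (tau gam yu theta : R) :
  fo_instance n adj ord ->
  bipartite n adj ->
  (forall a b, 0 <= a -> a <= b -> b <= 1 -> g a <= g b) ->
  (forall x, 0 <= x <= 1 -> 0 <= g x <= 1) ->
  g 1 = 1 ->
  (u < n)%nat -> (v < n)%nat -> adj u v = true ->
  deadline_before ord u v ->
  (forall x, (x < n)%nat -> x <> u -> x <> v -> 0 <= y x < 1) ->
  is_marginal_rank n adj ord (minus1 v) y u tau ->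
  is_marginal_rank n adj ord (minus1 u) y v gam ->
  0 <= yu < 1 ->
  is_marginal_rank n adj ord allv (upd y u yu) v theta ->
  tau < yu ->
  exists pr : Riemann_integrable
      (fun yv =>
         let z := upd (upd y u yu) v yv in
         let M := ranking n adj ord allv z in
         alpha g z M u + alpha g z M v * indic gam yv) 0 1,
    RiemannInt pr >=
      1 - gam - (1 - theta) * g theta + gam * Rmin (g yu) (1 - g theta).
Proof.
  intros [_ [Hirr Hperm]] [side Hside] Hg_mono Hg_range Hg1 Hu Hv Huv [l1 [l2 [l3 Hord]]]
    Hy Htau Hgam Hyu Htheta Htau_yu.
  assert (Hord_n : forall w, In w ord -> (w < n)%nat).
  { intros w Hw. apply (Permutation_in _ Hperm), in_seq in Hw. lia. }
  assert (Hord_nodup : NoDup ord) by exact (Permutation_NoDup (Permutation_sym Hperm) (seq_NoDup n 0)).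
  eapply integral_lower_bound; eassumption.
Qed.
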